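(* Every welded knot diagram can be transformed into a diagram of the trivial knot by a finite sequence of diagonal moves (together with classical and welded Reidemeister moves).
   Context: A welded knot diagram is a knot diagram that may have welded (virtual) crossings as well as classical crossings; welded knots are equivalence classes of welded knot diagrams under the three classical Reidemeister moves and the welded Reidemeister moves (the virtual Reidemeister moves together with the over-forbidden-type move allowing a strand passing over to slide past a welded crossing). A diagonal move (D-move) is a local move on a diagram defined as follows. Consider a disk in which the diagram consists of four arcs $a,b,c,d$ arranged in a ''$\#$'' pattern: $a$ and $c$ do not meet each other, $b$ and $d$ do not meet each other, and each of $a,c$ crosses each of $b,d$ exactly once in a classical crossing, giving four crossings labelled $1,2,3,4$ in cyclic order around the central square. The pairs $\{1,3\}$ and $\{2,4\}$ are the diagonal crossing pairs. A diagonal move changes the over/under information at both crossings of one diagonal pair and leaves the rest of the diagram unchanged; it is allowed for every choice of orientations of the arcs. *)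

(* Welded knot diagrams are encoded by their
   Gauss codes (Gauss diagrams). *)
From mathcomp Require Import all_boot.
From Stdlib Require Import Relations.
Set Implicit Arguments. Unset Strict Implicit. Unset Printing Implicit Defensive.

(* A letter of a Gauss code: (crossing label, over? , positive sign?) *)
Definition letter := (nat * bool * bool)%type.
Definition lab (x : letter) : nat := x.1.1.
Definition ov (x : letter) : bool := x.1.2.
Definition sg (x : letter) : bool := x.2.
Definition partner (x : letter) : letter := (lab x, ~~ ov x, sg x).

(* A (based) Gauss code of a one-component diagram, read along the knot. *)
Definition code := seq letter.

(* Well-formed Gauss code = welded knot diagram: every classical crossing is
   met exactly twice, once as over- and once as under-crossing, with one sign. *)
Definition wf_code (w : code) : bool :=
  uniq w && all (fun x => (partner x \in w) &&
                          (count (fun y => lab y == lab x) w == 2)) w.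

Definition flip (l : nat) (w : code) : code :=
  [seq if lab x == l then partner (lab x, ov x, ~~ sg x) else x | x <- w].

(* Local moves: the code is  f0 s1 g1 s2 g2 ... sk gk  where the segments
   s_i (in any order along the knot) are replaced by new segments s_i'. *)
Definition plug (f0 : code) (L : seq (code * code)) : code :=
  f0 ++ flatten [seq x.1 ++ x.2 | x <- L].

Definition local_move (P : seq (code * code)) (w w' : code) : Prop :=
  exists (f0 : code) (Q : seq (code * code)) (fills : seq code),
    [/\ perm_eq Q P, size fills = size Q,
        w = plug f0 (zip (map fst Q) fills) &
        w' = plug f0 (zip (map snd Q) fills)].

(* Sign convention: a crossing is positive iff det(d_over, d_under) > 0. *)

Definition R1 (w w' : code) : Prop :=
  exists (c : nat) (o s : bool), local_move [:: ([:: (c, o, s); (c, ~~ o, s)], [::])] w w'.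

(* Reidemeister II: delete a bigon (two crossings of opposite signs, one strand
   over the other at both). *)
Definition pairseg (c d : nat) (s b over : bool) : code :=
  if b then [:: (c, over, s); (d, over, ~~ s)] else [:: (d, over, ~~ s); (c, over, s)].

Definition R2 (w w' : code) : Prop :=
  exists (c d : nat) (s b1 b2 : bool), c <> d /\
    local_move [:: (pairseg c d s b1 true, [::]); (pairseg c d s b2 false, [::])] w w'.

(* Three straight strands Top > Mid > Bot (heights) bound a
   small triangle.  rho fixes the counterclockwise cyclic order of the sides
   (T,M,B if rho, T,B,M otherwise); sig X says whether strand X runs along the
   counterclockwise boundary orientation of the triangle.  The move reverses
   all sig X (translating one strand across the opposite vertex). *)
Inductive strand := ST | SM | SB.
Definition height (X : strand) : nat := match X with ST => 2 | SM => 1 | SB => 0 end.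
Definition next (rho : bool) (X : strand) : strand :=
  match X with
  | ST => if rho then SM else SB
  | SM => if rho then SB else ST
  | SB => if rho then ST else SM end.
Definition prev (rho : bool) (X : strand) : strand := next (~~ rho) X.
Definition seqstr (X Y : strand) : bool := height X == height Y.

Definition R3letter (p q r : nat) (rho : bool) (sig : strand -> bool)
    (X Y : strand) : letter :=
  let l := match X, Y with
           | ST, SM | SM, ST => p | ST, SB | SB, ST => q | _, _ => r end in
  let U := if height Y < height X then X else Y in
  let V := if height Y < height X then Y else X in
  let s := if seqstr (next rho U) V then sig U == sig V else sig U != sig V in
  (l, height Y < height X, s).

Definition R3seg (p q r : nat) (rho : bool) (sig : strand -> bool) (X : strand) : code :=
  if sig X then [:: R3letter p q r rho sig X (prev rho X); R3letter p q r rho sig X (next rho X)]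
  else [:: R3letter p q r rho sig X (next rho X); R3letter p q r rho sig X (prev rho X)].

Definition R3 (w w' : code) : Prop :=
  exists (p q r : nat) (rho sT sM sB : bool),
    [/\ p <> q, q <> r, p <> r &
    let sig X := match X with ST => sT | SM => sM | SB => sB end in
    local_move [seq (R3seg p q r rho sig X, R3seg p q r rho (fun Y => ~~ sig Y) X)
               | X <- [:: ST; SM; SB]] w w'].

(* Welded (over-commute) move: two consecutive over-crossings commute. *)
Definition OC (w w' : code) : Prop :=
  exists x y : letter, [/\ ov x, ov y, lab x <> lab y &
    local_move [:: ([:: x; y], [:: y; x])] w w'].

(* Change of base point. *)
Definition Rot (w w' : code) : Prop := w' = rot 1 w.

Definition welded_move (w w' : code) : Prop :=
  Rot w w' \/ R1 w w' \/ R2 w w' \/ R3 w w' \/ OC w w'.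

(* The "#": horizontal arcs a (y=0, direction al) and
   c (y=1, direction ga), vertical arcs b (x=0, direction be) and d (x=1,
   direction de); crossings 1=a.b at (0,0), 2=b.c at (0,1), 3=c.d at (1,1),
   4=d.a at (1,0), labels l1..l4; hi says whether the horizontal arc is over
   at crossing i.  Diagonal pairs {1,3} and {2,4}. *)
Definition hsign (eta theta hover : bool) : bool :=
  if hover then eta == theta else eta != theta.
Definition hletter (l : nat) (eta theta hover : bool) : letter :=
  (l, hover, hsign eta theta hover).
Definition vletter (l : nat) (eta theta hover : bool) : letter :=
  (l, ~~ hover, hsign eta theta hover).
Definition ord2 (b : bool) (x y : letter) : code := if b then [:: x; y] else [:: y; x].

Definition sharp_segs (l1 l2 l3 l4 : nat) (al be ga de h1 h2 h3 h4 : bool) : seq code :=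
  [:: ord2 al (hletter l1 al be h1) (hletter l4 al de h4);
      ord2 be (vletter l1 al be h1) (vletter l2 ga be h2);
      ord2 ga (hletter l2 ga be h2) (hletter l3 ga de h3);
      ord2 de (vletter l4 al de h4) (vletter l3 ga de h3)].

Definition Dmove (w w' : code) : Prop :=
  exists (l1 l2 l3 l4 : nat) (al be ga de h1 h2 h3 h4 : bool),
    [/\ uniq [:: l1; l2; l3; l4],
        local_move [seq (s, s) | s <- sharp_segs l1 l2 l3 l4 al be ga de h1 h2 h3 h4] w w &
        (w' = flip l1 (flip l3 w) \/ w' = flip l2 (flip l4 w))].

Definition wD_step (w w' : code) : Prop :=
  [/\ wf_code w, wf_code w' & (welded_move w w' \/ Dmove w w')].

Definition trivial_code : code := [::].

From mathcomp Require Import all_boot zify ring.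
From Stdlib Require Import Relations.
Set Implicit Arguments. Unset Strict Implicit. Unset Printing Implicit Defensive.

(* Every crossing change is a consequence of the moves.  Given a crossing x, add
   a kink k by Reidemeister I and push each strand of the kink across one strand
   of x by a Reidemeister II move.  Then x, k and one crossing of each bigon form
   a "#" in which x and k are diagonal; the diagonal move changes both, and the
   bigons and the kink (whose crossing has merely changed) are removed again.
   Up to crossing changes every welded knot is trivial: pick two occurrences
   x ... x' of a crossing in the Gauss code with no crossing repeated in between,
   make x and the crossings in between over-crossings, slide x up to x' by
   over-commute moves and remove the kink x x' by Reidemeister I.  This shortens
   the code. *)

Lemma partnerK : involutive partner.
Proof. by case=> [[n o] s]; rewrite /partner /= negbK. Qed.

Lemma partner_neq x : x != partner x.
Proof. by case: x => [[n o] s]; rewrite /partner /=; apply/eqP => -[]; case: o. Qed.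

Definition flip_letter (l : nat) (x : letter) : letter :=
  if lab x == l then partner (lab x, ov x, ~~ sg x) else x.

Lemma flipE l w : flip l w = map (flip_letter l) w.
Proof. by []. Qed.

Lemma lab_flip_letter l x : lab (flip_letter l x) = lab x.
Proof. by rewrite /flip_letter; case: ifP. Qed.

Lemma ov_flip_letter x : ov (flip_letter (lab x) x) = ~~ ov x.
Proof. by rewrite /flip_letter eqxx. Qed.

Lemma flip_letter_id l x : lab x != l -> flip_letter l x = x.
Proof. by rewrite /flip_letter => /negbTE ->. Qed.

Lemma flip_letterK l : involutive (flip_letter l).
Proof.
case=> [[n o] s]; rewrite /flip_letter /lab /ov /sg /partner /=.
by case: (n =P l) => [->|/eqP/negbTE ne] /=; rewrite ?eqxx ?negbK ?ne.
Qed.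

Lemma flip_letter_partner l x : flip_letter l (partner x) = partner (flip_letter l x).
Proof. by case: x => [[n o] s]; rewrite /flip_letter /partner /=; case: eqP. Qed.

Lemma flip_cons l x w : flip l (x :: w) = flip_letter l x :: flip l w.
Proof. by []. Qed.

Lemma flip_cat l s t : flip l (s ++ t) = flip l s ++ flip l t.
Proof. exact: map_cat. Qed.

Lemma size_flip l w : size (flip l w) = size w.
Proof. exact: size_map. Qed.

Lemma flip_id l w : l \notin map lab w -> flip l w = w.
Proof.
elim: w => // x w IH; rewrite inE negb_or => /andP [lx lw].
by rewrite flipE /= -flipE IH // flip_letter_id // eq_sym.
Qed.

Lemma wf_flip l w : wf_code w -> wf_code (flip l w).
Proof.
case/andP=> U /allP A; apply/andP; split.
  by rewrite flipE map_inj_uniq //; apply: (can_inj (flip_letterK l)).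
apply/allP=> _ /mapP [x xw ->]; case/andP: (A x xw) => px cx.
rewrite -flip_letter_partner map_f //= lab_flip_letter flipE count_map.
by rewrite (eq_count (a2 := fun z => lab z == lab x)) // => z /=; rewrite lab_flip_letter.
Qed.

Lemma wf_perm w w' : perm_eq w w' -> wf_code w -> wf_code w'.
Proof.
move=> P /andP [U /allP A]; apply/andP; split; first by rewrite -(perm_uniq P).
apply/allP=> x; rewrite -(perm_mem P) => /A /andP [px cx].
by rewrite -(perm_mem P) px -(permP P).
Qed.

Lemma wf_cons_kink c o s w : wf_code w -> c \notin map lab w ->
  wf_code ((c, o, s) :: (c, ~~ o, s) :: w).
Proof.
case/andP=> U /allP A F.
have Fw x : x \in w -> lab x != c by move=> xw; apply: contraNneq F => <-; apply: map_f.
have cnt : count (fun y => lab y == c) w = 0.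
  by apply/eqP; rewrite -leqn0 leqNgt -has_count; apply/hasPn => x /Fw.
apply/andP; split.
  rewrite /= U andbT !inE negb_or -andbA; apply/and3P; split.
  - by apply/eqP => -[]; case: o.
  - by apply/negP => /Fw; rewrite /lab /= eqxx.
  - by apply/negP => /Fw; rewrite /lab /= eqxx.
rewrite /= /partner /lab /ov /sg /= negbK !eqxx /= !inE !eqxx /= !orbT /= cnt eqxx /=.
apply/allP => x xw; case/andP: (A x xw) => px cx.
have := Fw x xw; rewrite /lab /= => ne.
by rewrite !inE px !orbT /= [c == _]eq_sym (negbTE ne).
Qed.

Lemma wf_behead_kink x w : wf_code (x :: partner x :: w) -> wf_code w.
Proof.
case/andP=> U0 /allP A; move: U0 => /= /and3P [_ _ U]; apply/andP; split => //.
apply/allP => y yw.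
have /andP [py cy] : (partner y \in [:: x, partner x & w]) &&
    (count (fun z => lab z == lab y) [:: x, partner x & w] == 2).
  by apply: A; rewrite !inE yw !orbT.
have cw : 0 < count (fun z => lab z == lab y) w by rewrite -has_count; apply/hasP; exists y.
have [E|ne] := eqVneq (lab y) (lab x).
  by move: cy cw; rewrite /= E eqxx; lia.
move: py; rewrite !inE => /or3P [/eqP Ep|/eqP Ep|->].
- by move: ne; rewrite -Ep eqxx.
- by move: ne; rewrite -[y]partnerK Ep partnerK eqxx.
by move: cy; rewrite /= [lab x == _]eq_sym (negbTE ne).
Qed.

Lemma partner_unique w x y : wf_code w -> x \in w -> y \in w ->
  lab y = lab x -> y != x -> y = partner x.
Proof.
case/andP=> U /allP A xw yw E ne; apply/eqP/negPn/negP => ne2.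
case/andP: (A x xw) => px /eqP cx.
have : size [:: x; partner x; y] <= size (filter (fun z => lab z == lab x) w).
  apply: uniq_leq_size.
    by rewrite /= !inE negb_or partner_neq eq_sym ne /= andbT eq_sym.
  by move=> z; rewrite !inE mem_filter => /or3P [] /eqP ->; rewrite ?px ?yw ?E eqxx.
by rewrite size_filter cx.
Qed.

Definition fresh_lab (w : code) : nat := (\max_(x <- w) lab x).+1.

Lemma lab_lt_fresh w x : x \in w -> lab x < fresh_lab w.
Proof. by move=> xw; rewrite ltnS (leq_bigmax_seq (F := lab)). Qed.

Lemma fresh_notin w n : fresh_lab w <= n -> n \notin map lab w.
Proof.
move=> le; apply/mapP => -[x /lab_lt_fresh lt E].
by move: (leq_trans lt le); rewrite E ltnn.
Qed.

Lemma local_move1 f h s t : local_move [:: (s, t)] (f ++ s ++ h) (f ++ t ++ h).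
Proof. by exists f, [:: (s, t)], [:: h]; split => //; rewrite /plug /= cats0. Qed.

Lemma local_move2 f g h s1 t1 s2 t2 :
  local_move [:: (s1, t1); (s2, t2)] (f ++ s2 ++ g ++ s1 ++ h) (f ++ t2 ++ g ++ t1 ++ h).
Proof.
exists f, [:: (s2, t2); (s1, t1)], [:: g; h]; split => //.
- by apply/permP => p /=; rewrite addnCA.
- by rewrite /plug /= cats0 -!catA.
- by rewrite /plug /= cats0 -!catA.
Qed.

Lemma local_move4_id w f g1 g2 g3 g4 s1 s2 s3 s4 :
  w = f ++ s1 ++ g1 ++ s2 ++ g2 ++ s3 ++ g3 ++ s4 ++ g4 ->
  local_move [:: (s1, s1); (s2, s2); (s3, s3); (s4, s4)] w w.
Proof.
by move=> ->; exists f, [:: (s1, s1); (s2, s2); (s3, s3); (s4, s4)], [:: g1; g2; g3; g4];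
  split => //; rewrite /plug /= cats0 -!catA.
Qed.

Lemma flip_plug l f0 A B :
  flip l (plug f0 (zip A B)) = plug (flip l f0) (zip (map (flip l) A) (map (flip l) B)).
Proof.
rewrite /plug flip_cat; congr (_ ++ _).
by elim: A B => [|s A IH] [|t B] //=; rewrite !flip_cat IH.
Qed.

Lemma local_move_flip l P u v : local_move P u v ->
  local_move [seq (flip l p.1, flip l p.2) | p <- P] (flip l u) (flip l v).
Proof.
case=> f0 [Q [fills [PQ sz -> ->]]].
exists (flip l f0), [seq (flip l p.1, flip l p.2) | p <- Q], (map (flip l) fills); split.
- exact: perm_map.
- by rewrite !size_map.
- by rewrite flip_plug -!map_comp.
- by rewrite flip_plug -!map_comp.
Qed.

Definition R2_pattern (c d : nat) (s b1 b2 : bool) : seq (code * code) :=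
  [:: (pairseg c d s b1 true, [::]); (pairseg c d s b2 false, [::])].

Lemma flip_pairseg l c d s b over : l != c -> l != d ->
  flip l (pairseg c d s b over) = pairseg c d s b over.
Proof.
move=> nc nd; rewrite /pairseg /= /flip_letter /lab /=.
by case: b; rewrite /= ![_ == l]eq_sym (negbTE nc) (negbTE nd).
Qed.

Lemma local_move_R2_flip l c d s b1 b2 u v : l != c -> l != d ->
  local_move (R2_pattern c d s b1 b2) u v ->
  local_move (R2_pattern c d s b1 b2) (flip l u) (flip l v).
Proof. by move=> nc nd /(local_move_flip l); rewrite /= !flip_pairseg. Qed.

Lemma R1_flip l u v : R1 u v -> R1 (flip l u) (flip l v).
Proof.
case=> c [o [s /(local_move_flip l) /=]].
have [<-|ne] := eqVneq c l; rewrite /flip_letter /lab /= ?eqxx => H.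
  by exists c, (~~ o), (~~ s).
by exists c, o, s.
Qed.

Notation wD_equiv := (clos_refl_sym_trans code wD_step).

Local Arguments rst_step {A R x y}.
Local Arguments rst_sym {A R x y}.
Local Arguments rst_trans {A R x} y {z}.

Lemma wD_R1 u v : wf_code u -> wf_code v -> R1 u v -> wD_step u v.
Proof. by move=> Wu Wv H; split => //; left; right; left. Qed.

Lemma wD_R2 c d s b1 b2 u v : c <> d -> wf_code u -> wf_code v ->
  local_move (R2_pattern c d s b1 b2) u v -> wD_step u v.
Proof. by move=> ne Wu Wv H; split => //; left; right; right; left; exists c, d, s, b1, b2. Qed.

Lemma wD_kink f h c o s :
  wf_code (f ++ [:: (c, o, s); (c, ~~ o, s)] ++ h) ->
  wD_step (f ++ [:: (c, o, s); (c, ~~ o, s)] ++ h) (f ++ h).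
Proof.
move=> W; apply: wD_R1 => //; last by exists c, o, s; apply: local_move1.
apply: (@wf_behead_kink (c, o, s)); apply: wf_perm W.
by apply/permP => p; rewrite /partner /lab /ov /sg /= !count_cat /=; lia.
Qed.

Lemma wD_OC f h x y : ov x -> ov y -> lab x <> lab y ->
  wf_code (f ++ x :: y :: h) -> wD_step (f ++ x :: y :: h) (f ++ y :: x :: h).
Proof.
move=> ox oy ne W; split => //.
  by apply: wf_perm W; apply/permP => p; rewrite /= !count_cat /=; lia.
by left; do 4 right; exists x, y; split => //; apply: (local_move1 f h [:: x; y]).
Qed.

Section CrossingChange.

Variables (f g h : code) (X : nat) (o be : bool).

Let a : letter := (X, o, hsign true be o).
Let w0 : code := f ++ a :: g ++ partner a :: h.

Hypothesis wf_w0 : wf_code w0.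

Let l2 := fresh_lab w0.
Let l2' := l2.+1.
Let l3 := l2.+2.
Let l4 := l2.+3.
Let l4' := l2.+4.

(* The "#" is [sharp_segs X l2 l3 l4 true be true false o true true false]: its
   arcs a and b run through a and partner a, its arcs c and d are the two
   strands of the kink l3, and l2, l4 come from the bigons l2/l2' and l4/l4'. *)
Let kink : code := [:: (l3, true, false); (l3, false, false)].
Let b_bigon : code := if be then partner a :: pairseg l2 l2' be true false
                      else pairseg l2 l2' be false false ++ [:: partner a].
Let c_bigon : code := pairseg l2 l2' be false true.
Let a_bigon : code := pairseg l4 l4' true true false.
Let d_bigon : code := pairseg l4 l4' true true true.

Let w1 : code := w0 ++ kink.
Let w2 : code := f ++ a :: g ++ b_bigon ++ h ++ c_bigon ++ kink.
Let w3 : code := f ++ a :: a_bigon ++ g ++ b_bigon ++ h ++ c_bigon ++ kink ++ d_bigon.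

Lemma X_lt_fresh : X < l2.
Proof. by apply: (lab_lt_fresh (x := a)); rewrite mem_cat inE eqxx orbT. Qed.

Ltac solve_fresh := rewrite /= ?inE ?negb_or; repeat (apply/andP; split);
  try (apply: fresh_notin; rewrite /l2' /l3 /l4 /l4'; lia);
  rewrite /lab /= /l2' /l3 /l4 /l4'; lia.

Lemma wf_w1 : wf_code w1.
Proof.
apply: (@wf_perm (kink ++ w0)); first by rewrite perm_catC.
by apply: wf_cons_kink => //; solve_fresh.
Qed.

Lemma wf_w2 : wf_code w2.
Proof.
apply: (@wf_perm ((l2, true, be) :: (l2, ~~ true, be) ::
                  (l2', true, ~~ be) :: (l2', ~~ true, ~~ be) :: kink ++ w0)).
  apply/permP => p; rewrite /w2 /w0 /b_bigon /c_bigon /kink /pairseg.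
  by case: (be); rewrite /=; do ! rewrite count_cat /=; ring.
do 3 (apply: wf_cons_kink; last by solve_fresh).
exact: wf_w0.
Qed.

Lemma wf_w3 : wf_code w3.
Proof.
apply: (@wf_perm ((l4, true, true) :: (l4, ~~ true, true) ::
                  (l4', true, false) :: (l4', ~~ true, false) ::
                  (l2, true, be) :: (l2, ~~ true, be) ::
                  (l2', true, ~~ be) :: (l2', ~~ true, ~~ be) :: kink ++ w0)).
  apply/permP => p; rewrite /w3 /w0 /b_bigon /c_bigon /kink /a_bigon /d_bigon /pairseg.
  by case: (be); rewrite /=; do ! rewrite count_cat /=; ring.
do 5 (apply: wf_cons_kink; last by solve_fresh).
exact: wf_w0.
Qed.

Lemma R1_w1_w0 : R1 w1 w0.
Proof. by exists l3, true, false; have := local_move1 w0 [::] kink [::]; rewrite !cats0. Qed.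

Lemma R2_w2_w1 : local_move (R2_pattern l2 l2' be false be) w2 w1.
Proof.
rewrite /R2_pattern /w2 /w1 /w0 /b_bigon /c_bigon; case: be.
- have := local_move2 (f ++ a :: g ++ [:: partner a]) h kink
            (pairseg l2 l2' true false true) [::] (pairseg l2 l2' true true false) [::].
  by rewrite /= -?catA /= -?catA /=.
- have := local_move2 (f ++ a :: g) (partner a :: h) kink
            (pairseg l2 l2' false false true) [::] (pairseg l2 l2' false false false) [::].
  by rewrite /= -?catA /= -?catA /=.
Qed.

Lemma R2_w3_w2 : local_move (R2_pattern l4 l4' true true true) w3 w2.
Proof.
have := local_move2 (f ++ [:: a]) (g ++ b_bigon ++ h ++ c_bigon ++ kink) [::]
          d_bigon [::] a_bigon [::].
by rewrite /w3 /w2 /= -?catA /= -?catA /= ?cats0.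
Qed.

Lemma Dmove_w3 : Dmove w3 (flip X (flip l3 w3)).
Proof.
have X_lt := X_lt_fresh.
exists X, l2, l3, l4, true, be, true, false, o, true, true, false; split; last by left.
  by rewrite /= !inE /l3 /l4; lia.
rewrite /sharp_segs /ord2 /hletter /vletter /w3 /a_bigon /b_bigon /c_bigon /d_bigon /kink /a.
case: be => /=.
- apply: (local_move4_id (f := f) (g1 := (l4', false, false) :: g)
            (g2 := (l2', false, false) :: h ++ [:: (l2', true, false)]) (g3 := [::])
            (g4 := [:: (l4', true, false)])).
  by rewrite /= -?catA /= -?catA.
- apply: (local_move4_id (f := f) (g1 := (l4', false, false) :: g ++ [:: (l2', false, true)])
            (g2 := h ++ [:: (l2', true, true)]) (g3 := [::]) (g4 := [:: (l4', true, false)])).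
  by rewrite /= -?catA /= -?catA.
Qed.

Lemma equiv_flip_crossing : wD_equiv w0 (flip X w0).
Proof.
have X_lt := X_lt_fresh.
have ne22 : l2 <> l2' by rewrite /l2'; lia.
have ne44 : l4 <> l4' by rewrite /l4 /l4'; lia.
pose F u := flip X (flip l3 u).
have wf_F u : wf_code u -> wf_code (F u) by move=> wf_u; do 2 apply: wf_flip.
have F_R2 c d s b1 b2 u v : c <> d -> [&& X != c, X != d, l3 != c & l3 != d] ->
    wf_code u -> wf_code v -> local_move (R2_pattern c d s b1 b2) u v ->
    wD_step (F u) (F v).
  move=> ne /and4P [Xc Xd l3c l3d] wf_u wf_v uv.
  apply: (wD_R2 ne (wf_F _ wf_u) (wf_F _ wf_v)).
  exact: local_move_R2_flip Xc Xd (local_move_R2_flip l3c l3d uv).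
have F_w0 : F w0 = flip X w0.
  by rewrite /F (flip_id (l := l3)) //; apply: fresh_notin; rewrite /l3; lia.
apply: (rst_trans w1); first exact: rst_sym (rst_step (wD_R1 wf_w1 wf_w0 R1_w1_w0)).
apply: (rst_trans w2); first exact: rst_sym (rst_step (wD_R2 ne22 wf_w2 wf_w1 R2_w2_w1)).
apply: (rst_trans w3); first exact: rst_sym (rst_step (wD_R2 ne44 wf_w3 wf_w2 R2_w3_w2)).
apply: (rst_trans (F w3)).
  by apply: rst_step; split; [exact: wf_w3 | exact: wf_F wf_w3 | right; exact: Dmove_w3].
apply: (rst_trans (F w2)).
  by apply: rst_step; apply: F_R2 ne44 _ wf_w3 wf_w2 R2_w3_w2; rewrite /l3 /l4 /l4'; lia.
apply: (rst_trans (F w1)).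
  by apply: rst_step; apply: F_R2 ne22 _ wf_w2 wf_w1 R2_w2_w1; rewrite /l2' /l3; lia.
rewrite -F_w0; apply: rst_step; apply: wD_R1 (wf_F _ wf_w1) (wf_F _ wf_w0) _.
by do 2 apply: R1_flip; exact: R1_w1_w0.
Qed.

End CrossingChange.

Lemma equiv_flip_pair f g h x : wf_code (f ++ x :: g ++ partner x :: h) ->
  wD_equiv (f ++ x :: g ++ partner x :: h) (flip (lab x) (f ++ x :: g ++ partner x :: h)).
Proof.
case: x => [[X o] s].
(* orient the arc b of the "#" so that its crossing with a has sign s *)
have -> : s = hsign true (if o then s else ~~ s) o by case: o; case: s.
exact: equiv_flip_crossing.
Qed.

Lemma split_mem2 (T : eqType) (s : seq T) x y : x \in s -> y \in s -> x != y ->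
  exists f g h, s = f ++ x :: g ++ y :: h \/ s = f ++ y :: g ++ x :: h.
Proof.
case/splitPr => f1 h1; rewrite mem_cat inE => /or3P [yf|/eqP->|yh] ne.
- by case/splitPr: yf => f g; exists f, g, h1; right; rewrite -catA.
- by rewrite eqxx in ne.
- by case/splitPr: yh => g h; exists f1, g, h; left.
Qed.

Lemma equiv_flip w c : wf_code w -> wD_equiv w (flip c w).
Proof.
move=> W; have [/mapP [x xw ->] | nc] := boolP (c \in map lab w); last first.
  by rewrite flip_id //; apply: rst_refl.
have px : partner x \in w by case/andP: W => _ /allP /(_ x xw) /andP [].
have [f [g [h [Ew|Ew]]]] := split_mem2 xw px (partner_neq x); rewrite Ew in W *.
  exact: equiv_flip_pair.
by have := @equiv_flip_pair f g h (partner x); rewrite partnerK; apply.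
Qed.

Lemma first_repeat (T U : eqType) (k : T -> U) (s : seq T) : ~~ uniq (map k s) ->
  exists f x m y h,
    [/\ s = f ++ x :: m ++ y :: h, k y = k x & uniq (map k (x :: m))].
Proof.
elim/last_ind: s => // s z IH.
have [Us|NU] := boolP (uniq (map k s)); last first.
  move=> _; have [f [x [m [y [h [-> E1 E2]]]]]] := IH NU.
  by exists f, x, m, y, (rcons h z); split => //; rewrite -!cats1 -!catA /= -!catA.
rewrite map_rcons rcons_uniq Us andbT negbK => /mapP [x xs Ez].
case/splitPr: xs Us => f m Us; exists f, x, m, z, [::]; split => //.
- by rewrite -cats1 -catA.
- by move: Us; rewrite map_cat cat_uniq => /and3P [].
Qed.

Definition reducible (w : code) : Prop :=
  exists2 v, wf_code v & size v < size w /\ wD_equiv w v.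

Lemma reducible_equiv w v : wD_equiv w v -> size v = size w -> reducible v -> reducible w.
Proof.
move=> wv E [u W [lt vu]]; exists u => //; split; first by rewrite -E.
exact: rst_trans vu.
Qed.

Lemma reducible_flip c w : wf_code w -> reducible (flip c w) -> reducible w.
Proof. by move=> W; apply: reducible_equiv (equiv_flip c W) (size_flip c w). Qed.

Lemma reducible_over_arc m f h x : ov x -> uniq (map lab (x :: m)) ->
  wf_code (f ++ x :: m ++ partner x :: h) -> reducible (f ++ x :: m ++ partner x :: h).
Proof.
elim: m f h => [|z m IH] f h ox.
  case: x ox => [[c o] s] _ _ W; have step := wD_kink W.
  by exists (f ++ h); [case: step | split; [rewrite !size_cat /=; lia | exact: rst_step]].
rewrite /= !inE negb_or => /andP [/andP [xz xm] /andP [zm um]] W.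
have slide f' h' z' : ov z' -> lab z' = lab z ->
    wf_code (f' ++ x :: z' :: m ++ partner x :: h') ->
    reducible (f' ++ x :: z' :: m ++ partner x :: h').
  move=> oz' E W'; have xz' : lab x <> lab z' by rewrite E; apply/eqP.
  have step := wD_OC ox oz' xz' W'.
  apply: reducible_equiv (rst_step step) _ _; first by rewrite !size_cat.
  rewrite -cat_rcons -cats1; apply: IH => //; first by rewrite /= xm.
  by case: step; rewrite cats1 cat_rcons.
have [oz|uz] := boolP (ov z); first exact: slide.
apply: (reducible_flip (c := lab z) W).
have E : flip (lab z) (f ++ x :: z :: m ++ partner x :: h) =
          flip (lab z) f ++ x :: flip_letter (lab z) z :: m ++ partner x :: flip (lab z) h.
  rewrite !(flip_cat, flip_cons) (flip_id zm) (flip_letter_id xz).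
  by rewrite (@flip_letter_id _ (partner x) xz).
rewrite E; apply: slide; rewrite ?ov_flip_letter ?lab_flip_letter //.
by rewrite -E; apply: wf_flip.
Qed.

Lemma reducible_arc f m h x : uniq (map lab (x :: m)) ->
  wf_code (f ++ x :: m ++ partner x :: h) -> reducible (f ++ x :: m ++ partner x :: h).
Proof.
move=> U W; have [ox|ux] := boolP (ov x); first exact: reducible_over_arc.
apply: (reducible_flip (c := lab x) W).
have xm : lab x \notin map lab m by case/andP: U.
have E : flip (lab x) (f ++ x :: m ++ partner x :: h) =
    flip (lab x) f ++ flip_letter (lab x) x :: m ++
      partner (flip_letter (lab x) x) :: flip (lab x) h.
  by rewrite !(flip_cat, flip_cons) (flip_id xm) flip_letter_partner.
rewrite E; apply: reducible_over_arc; rewrite ?ov_flip_letter /= ?lab_flip_letter //.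
by rewrite -E; apply: wf_flip.
Qed.

Lemma reducible_wf w : wf_code w -> w != [::] -> reducible w.
Proof.
move=> W nz.
have NU : ~~ uniq (map lab w).
  case: w W nz => // x t W _; apply/negP => U.
  have /andP [_ /eqP two] := allP (andP W).2 x (mem_head x t).
  have : count_mem (lab x) (map lab (x :: t)) <= 1 by rewrite count_uniq_mem ?leq_b1.
  by rewrite count_map (eq_count (a2 := fun y => lab y == lab x)) // two.
have [f [x [m [y [h [Ew Ey Ux]]]]]] := first_repeat NU.
have xw : x \in w by rewrite Ew mem_cat inE eqxx orbT.
have yw : y \in w by rewrite Ew !(mem_cat, inE) eqxx !orbT.
have yx : y != x.
  apply: (contraTneq _ (andP W).1) => yx.
  by rewrite Ew cat_uniq /= yx mem_cat inE eqxx !orbT !andbF.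
have Ey' := partner_unique W xw yw Ey yx.
rewrite Ew Ey' in W *.
exact: reducible_arc.
Qed.

Theorem mainTheorem4 (w : code) :
  wf_code w -> clos_refl_sym_trans code wD_step w trivial_code.
Proof.
have [n] := ubnP (size w); elim: n w => // n IH w lt_w_n W.
have [->|nz] := eqVneq w [::]; first exact: rst_refl.
have [v wf_v [lt_v_w wv]] := reducible_wf W nz.
by apply: rst_trans wv (IH v _ wf_v); rewrite (leq_trans lt_v_w) // -ltnS.
Qed.
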